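(* For even $m\ge 18$, let $G^{\mathrm{mix}}_m$ be the graph with vertex set $\{u^*\}\cup\{a\}\cup B\cup\{z,x,y\}\cup L$, where $\{a\}\cup B$ with $|B|=3$ induces a $K_4$, $|L|=m-14$, $u^*$ is adjacent to every vertex of $\{a\}\cup B\cup\{z\}\cup L$, and the remaining edges are exactly $ax$, $xy$, $yz$ (so $G^{\mathrm{mix}}_m$ has $m$ edges). Its spectral radius equals the largest root of \[ f_{\mathrm{mix}}(x)=x^7-2x^6+(3-m)x^5+(2m-24)x^4+(6m-61)x^3+(84-6m)x^2+(90-7m)x+2m-28, \] and $\rho(G^{\mathrm{mix}}_m)<\rho'(m)$.
   Context: $\rho(G)$ denotes the adjacency spectral radius. For even $m$, $\rho'(m)$ is the largest real root of $p_m(x)=x^4-mx^2-(m-2)x+\frac{m}{2}-1$. *)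

From HB Require Import structures.
From mathcomp Require Import all_boot all_order all_algebra.
Set Implicit Arguments. Unset Strict Implicit. Unset Printing Implicit Defensive.
Import Order.TTheory GRing.Theory Num.Theory.
Local Open Scope ring_scope.

Definition is_spectral_radius (R : realFieldType) (n : nat) (A : 'M[R]_n) (r : R) : Prop :=
  (exists2 l, eigenvalue A l & `|l| = r) /\ (forall l, eigenvalue A l -> `|l| <= r).

Definition is_largest_root (R : realFieldType) (p : {poly R}) (r : R) : Prop :=
  root p r /\ (forall x, root p x -> x <= r).

(* Vertex encoding of G^mix_m on {0, ..., m-7} (m-6 vertices):
   0 = u*, 1 = a, 2,3,4 = B, 5 = z, 6 = x, 7 = y, 8..m-7 = L (m-14 vertices). *)
Definition mix_edge0 (i j : nat) : bool :=
  [|| (i == 0%N) && ((1 <= j <= 5)%N || (8 <= j)%N),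
      [&& (1 <= i <= 4)%N, (1 <= j <= 4)%N & (i < j)%N],
      (i == 1%N) && (j == 6%N),
      (i == 6%N) && (j == 7%N)
    | (i == 5%N) && (j == 7%N)].

Definition mix_adj (i j : nat) : bool := mix_edge0 i j || mix_edge0 j i.

Definition Gmix_adjmx (R : nzRingType) (m : nat) : 'M[R]_(m - 6) :=
  \matrix_(i, j) (mix_adj i j)%:R.

Definition f_mix (R : nzRingType) (m : nat) : {poly R} :=
  'X^7 - 2%:P * 'X^6 + (3 - m%:R)%:P * 'X^5 + (2 * m%:R - 24)%:P * 'X^4
  + (6 * m%:R - 61)%:P * 'X^3 + (84 - 6 * m%:R)%:P * 'X^2
  + (90 - 7 * m%:R)%:P * 'X + (2 * m%:R - 28)%:P.

Definition p_rho' (R : fieldType) (m : nat) : {poly R} :=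
  'X^4 - (m%:R)%:P * 'X^2 - (m%:R - 2)%:P * 'X + (m%:R / 2 - 1)%:P.

(* For m >= 18, write m = s^2.  The polynomial f_mix changes sign between
   s - 1/2 and s + 1/4, while p_m is still negative at s + 1/4 and increasing
   beyond it, so f_mix has a root rho below the largest root rho' of p_m.
   For every root l of f_mix, an explicit vector that is constant on the vertex
   classes u*, a, B, z, x, y, L is an l-eigenvector of the adjacency matrix, and
   for rho it is entrywise positive; the Perron-Frobenius comparison then shows
   that no eigenvalue exceeds rho in absolute value. *)
From HB Require Import structures.
From mathcomp Require Import all_boot all_order all_algebra.
From mathcomp Require Import ring lra zify.
Import Order.TTheory GRing.Theory Num.Theory.
Set Implicit Arguments. Unset Strict Implicit.
Local Open Scope ring_scope.

Lemma eigenvalue_norm_le_perron (R : numFieldType) (n : nat) (A : 'M[R]_n)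
    (p : 'cV[R]_n) (rho : R) :
  (forall i j, 0 <= A i j) -> (forall i, 0 < p i 0) -> A *m p = rho *: p ->
  forall l, eigenvalue A l -> `|l| <= rho.
Proof.
move=> A_ge0 p_gt0 Ap l /eigenvalueP [v vA v_neq0].
have col_le j : `|l| * `|v 0 j| <= \sum_i `|v 0 i| * A i j.
  rewrite -normrM.
  have -> : l * v 0 j = \sum_i v 0 i * A i j.
    by have := congr1 (fun w : 'rV[R]_n => w 0 j) vA; rewrite !mxE => <-.
  apply: le_trans (ler_norm_sum _ _ _) _.
  by apply: ler_sum => i _; rewrite normrM (ger0_norm (A_ge0 i j)).
set S := \sum_j `|v 0 j| * p j 0.
have S_gt0 : 0 < S.
  rewrite lt_def sumr_ge0 ?andbT => [|j _]; last by rewrite mulr_ge0 // ltW.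
  apply: contra v_neq0 => /eqP S0; apply/eqP/rowP => j; rewrite mxE.
  have vp_ge0 k : xpredT k -> 0 <= `|v 0 k| * p k 0 by rewrite mulr_ge0 // ltW.
  have /eqP := psumr_eq0P vp_ge0 S0 (i:=j) isT.
  by rewrite mulf_eq0 (gt_eqF (p_gt0 j)) orbF normr_eq0 => /eqP.
rewrite -(ler_pM2r S_gt0).
have rhoS : rho * S = \sum_i `|v 0 i| * \sum_j A i j * p j 0.
  rewrite /S mulr_sumr; apply: eq_bigr => i _.
  have := congr1 (fun w : 'cV[R]_n => w i 0) Ap; rewrite !mxE => ->.
  by rewrite mulrCA.
rewrite rhoS /S mulr_sumr.
under [X in _ <= X]eq_bigr do rewrite mulr_sumr.
rewrite exchange_big /=; apply: ler_sum => j _.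
under eq_bigr do rewrite mulrA.
by rewrite mulrA -mulr_suml ler_wpM2r ?col_le ?ltW.
Qed.

Lemma ge_shift (R : numDomainType) (c s : R) : c <= s -> exists2 t, 0 <= t & s = t + c.
Proof. by move=> c_le; exists (s - c); rewrite ?subr_ge0 ?subrK. Qed.

Section ClassVector.
Variables (R : comNzRingType) (cu ca cb cz cx cy cl : R).

Definition mix_class_fun (i : nat) : R :=
  if i == 0%N then cu else if i == 1%N then ca else if (i <= 4)%N then cb
  else if i == 5%N then cz else if i == 6%N then cx else if i == 7%N then cy
  else cl.

Definition mix_nbr_sum (k i : nat) : R :=
  if i == 0%N then ca + 3 * cb + cz + k%:R * cl
  else if i == 1%N then cu + 3 * cb + cx
  else if (i <= 4)%N then cu + ca + 2 * cb
  else if i == 5%N then cu + cy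
  else if i == 6%N then ca + cy
  else if i == 7%N then cx + cz
  else cu.

Lemma mix_adj_sum (n i : nat) : (8 <= n)%N -> (i < n)%N ->
  \sum_(j < n) (mix_adj i j)%:R * mix_class_fun j = mix_nbr_sum (n - 8) i.
Proof.
move=> n_ge8 i_lt_n.
rewrite -(big_mkord xpredT (fun j => (mix_adj i j)%:R * mix_class_fun j)).
rewrite (big_cat_nat _ (n := 8)) //=.
rewrite [X in _ + X](eq_big_nat _ _ (F2 := fun _ => if i == 0%N then cl else 0));
  last first.
  move=> j /andP[j_ge8 _].
  case: j j_ge8 => [|[|[|[|[|[|[|[|j]]]]]]]] // _.
  rewrite /mix_class_fun /mix_adj /mix_edge0 /=.
  by case: i i_lt_n => [|[|[|[|[|[|[|[|i]]]]]]]] _ /=; rewrite ?mul1r ?mul0r.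
rewrite sumr_const_nat !big_nat_recl // big_geq //.
rewrite /mix_class_fun /mix_nbr_sum /mix_adj /mix_edge0 /=.
by case: i i_lt_n => [|[|[|[|[|[|[|[|i]]]]]]]] _ /=;
  rewrite ?mul1r ?mul0r ?addr0 ?add0r ?mulr_natl; ring.
Qed.

End ClassVector.

Section Evaluation.
Variable R : fieldType.

Definition f_mix_val (M x : R) : R :=
  x ^+ 7 - 2 * x ^+ 6 + (3 - M) * x ^+ 5 + (2 * M - 24) * x ^+ 4
  + (6 * M - 61) * x ^+ 3 + (84 - 6 * M) * x ^+ 2 + (90 - 7 * M) * x + (2 * M - 28).

Definition p_rho'_val (M x : R) : R :=
  x ^+ 4 - M * x ^+ 2 - (M - 2) * x + (M / 2 - 1).

Lemma horner_f_mix (m : nat) (x : R) : (f_mix R m).[x] = f_mix_val m%:R x.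
Proof. by rewrite /f_mix /f_mix_val !hornerE; ring. Qed.

Lemma horner_p_rho' (m : nat) (x : R) : (p_rho' R m).[x] = p_rho'_val m%:R x.
Proof. by rewrite /p_rho' /p_rho'_val !hornerE; ring. Qed.

End Evaluation.

Section Eigenvector.
Variables (R : realFieldType) (m : nat).
Hypothesis m_ge18 : (18 <= m)%N.

Definition weight_L (l : R) := l ^+ 5 - 2 * l ^+ 4 - 6 * l ^+ 3 + 6 * l ^+ 2 + 7 * l - 2.
Definition weight_a (l : R) := l ^+ 4 + l ^+ 3 - 2 * l ^+ 2 - l - 2.
Definition weight_B (l : R) := l ^+ 4 + l ^+ 3 - 3 * l ^+ 2 - 2 * l + 2.
Definition weight_z (l : R) := l ^+ 4 - 2 * l ^+ 3 - 5 * l ^+ 2 + 5 * l + 4.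
Definition weight_x (l : R) := l ^+ 3 + 2 * l ^+ 2 - 3 * l - 4.
Definition weight_y (l : R) := l ^+ 3 - l ^+ 2 - 3 * l + 2.

(* Normalised by the value [weight_L l] on L; the eigen-equations at the
   vertices of L, a, B, x, y, z then hold identically in [l], and the one at u*
   is [f_mix l = 0]. *)
Definition Gmix_eigvec (l : R) : 'cV[R]_(m - 6) :=
  \col_i mix_class_fun (l * weight_L l) (l * weight_a l) (l * weight_B l)
    (l * weight_z l) (l * weight_x l) (l * weight_y l) (weight_L l) i.

Lemma Gmix_eigvecP (l : R) : f_mix_val m%:R l = 0 ->
  Gmix_adjmx R m *m Gmix_eigvec l = l *: Gmix_eigvec l.
Proof.
move=> f_l; apply/colP => i; rewrite !mxE.
under eq_bigr do rewrite !mxE.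
rewrite mix_adj_sum; [|lia|exact: ltn_ord].
have L_size : ((m - 6 - 8)%:R : R) = m%:R - 14 by rewrite -subnDA natrB //; lia.
rewrite /mix_nbr_sum /mix_class_fun.
case: i => -[|[|[|[|[|[|[|[|i]]]]]]]] _ /=;
  rewrite /weight_L /weight_a /weight_B /weight_z /weight_x /weight_y; try ring.
by rewrite L_size -[RHS]subr0 -f_l /f_mix_val; ring.
Qed.

Lemma Gmix_eigvec_neq0 (l : R) : Gmix_eigvec l != 0.
Proof.
apply/negP => /eqP/colP entry0.
have := entry0 (@Ordinal (m - 6) 8 ltac:(lia)).
have := entry0 (@Ordinal (m - 6) 2 ltac:(lia)).
have := entry0 (@Ordinal (m - 6) 1 ltac:(lia)).
rewrite !mxE /mix_class_fun /= => wa0 wB0 wL0.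
have l_neq0 : l != 0.
  by apply/eqP => l0; move: wL0; rewrite l0 /weight_L expr0n /=; lra.
move/eqP: wa0; move/eqP: wB0; rewrite !mulf_eq0 (negbTE l_neq0) /= => /eqP wB0 /eqP wa0.
have quad0 : l ^+ 2 + l - 4 = 0 by move: wa0 wB0; rewrite /weight_a /weight_B; lra.
have : weight_a l = (l ^+ 2 + 2) * (l ^+ 2 + l - 4) + (6 - 3 * l)
  by rewrite /weight_a; ring.
rewrite wa0 quad0 mulr0 add0r => /esym lin0.
have l_eq2 : l = 2 by lra.
by move: quad0; rewrite l_eq2 expr2; lra.
Qed.

Lemma weights_gt0 (l : R) : 37/10 <= l ->
  [/\ 0 < weight_L l, 0 < weight_a l, 0 < weight_B l
    & [/\ 0 < weight_z l, 0 < weight_x l & 0 < weight_y l]].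
Proof.
move=> /ge_shift [t t_ge0 ->].
have := exprn_ge0 2 t_ge0; have := exprn_ge0 3 t_ge0.
have := exprn_ge0 4 t_ge0; have := exprn_ge0 5 t_ge0.
rewrite /weight_L /weight_a /weight_B /weight_z /weight_x /weight_y.
by move=> *; split; try split; lra.
Qed.

Lemma Gmix_eigvec_gt0 (l : R) : 37/10 <= l -> forall i, 0 < Gmix_eigvec l i 0.
Proof.
move=> l_ge i; have l_gt0 : 0 < l by lra.
have [wL wa wB [wz wx wy]] := weights_gt0 l_ge.
by rewrite mxE /mix_class_fun; repeat case: ifP => _; rewrite ?mulr_gt0.
Qed.

Lemma Gmix_adjmx_tr : (Gmix_adjmx R m)^T = Gmix_adjmx R m.
Proof. by apply/matrixP => i j; rewrite !mxE /mix_adj orbC. Qed.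

Lemma f_mix_root_eigenvalue (l : R) : f_mix_val m%:R l = 0 ->
  eigenvalue (Gmix_adjmx R m) l.
Proof.
move=> f_l; apply/eigenvalueP; exists (Gmix_eigvec l)^T.
  by rewrite -[X in _ *m X]Gmix_adjmx_tr -trmx_mul Gmix_eigvecP // linearZ.
by rewrite trmx_eq0 Gmix_eigvec_neq0.
Qed.

Lemma Gmix_eigenvalue_norm_le (rho : R) : f_mix_val m%:R rho = 0 -> 37/10 <= rho ->
  forall l, eigenvalue (Gmix_adjmx R m) l -> `|l| <= rho.
Proof.
move=> f_rho rho_ge; apply: (eigenvalue_norm_le_perron _ _ (Gmix_eigvecP f_rho)).
- by move=> i j; rewrite mxE ler0n.
- exact: Gmix_eigvec_gt0.
Qed.

End Eigenvector.

Section Bounds.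
Variable R : realFieldType.

Lemma f_mix_val_sqrt_add_gt0 (s : R) : 21/5 <= s -> 0 < f_mix_val (s ^+ 2) (s + 1/4).
Proof.
move=> /ge_shift [t t_ge0 ->]; rewrite /f_mix_val.
have := exprn_ge0 2 t_ge0; have := exprn_ge0 3 t_ge0; have := exprn_ge0 4 t_ge0.
have := exprn_ge0 5 t_ge0; have := exprn_ge0 6 t_ge0; have := exprn_ge0 7 t_ge0.
by move=> *; lra.
Qed.

Lemma f_mix_val_sqrt_sub_lt0 (s : R) : 21/5 <= s -> f_mix_val (s ^+ 2) (s - 1/2) < 0.
Proof.
move=> /ge_shift [t t_ge0 ->]; rewrite /f_mix_val.
have := exprn_ge0 2 t_ge0; have := exprn_ge0 3 t_ge0; have := exprn_ge0 4 t_ge0.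
have := exprn_ge0 5 t_ge0; have := exprn_ge0 6 t_ge0; have := exprn_ge0 7 t_ge0.
have : 0 <= t ^+ 2 * (t - 2/3) ^+ 2 by rewrite mulr_ge0 ?sqr_ge0.
by move=> *; lra.
Qed.

Lemma p_rho'_val_sqrt_add_lt0 (s : R) : 21/5 <= s -> p_rho'_val (s ^+ 2) (s + 1/4) < 0.
Proof.
move=> /ge_shift [t t_ge0 ->]; rewrite /p_rho'_val.
have := exprn_ge0 2 t_ge0; have := exprn_ge0 3 t_ge0; have := exprn_ge0 4 t_ge0.
by move=> *; lra.
Qed.

Lemma p_rho'_val_self_gt0 (M : R) : 18 <= M -> 0 < p_rho'_val M M.
Proof. by rewrite /p_rho'_val; nra. Qed.

Lemma p_rho'_val_lt (M a b : R) : 18 <= M -> M <= a ^+ 2 -> 4 <= a -> a < b ->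
  p_rho'_val M a < p_rho'_val M b.
Proof.
move=> M_ge a2_ge a_ge a_lt_b; rewrite -subr_gt0.
have -> : p_rho'_val M b - p_rho'_val M a =
    (b - a) * (b ^+ 3 + b ^+ 2 * a + b * a ^+ 2 + a ^+ 3 - M * (a + b) - (M - 2)).
  by rewrite /p_rho'_val; ring.
rewrite mulr_gt0 ?subr_gt0 //.
have : a ^+ 2 <= b ^+ 2 by nra.
by nra.
Qed.

End Bounds.

Section Roots.
Variables (R : rcfType) (m : nat).
Hypothesis m_ge18 : (18 <= m)%N.

Let M : R := m%:R.
Let s : R := Num.sqrt M.

Let M_ge18 : 18 <= M.
Proof. by rewrite /M (ler_nat R 18 m). Qed.

Let s_sqr : s ^+ 2 = M.
Proof. by rewrite sqr_sqrtr // (le_trans _ M_ge18). Qed.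

Let s_ge : 21/5 <= s.
Proof. by have := sqrtr_ge0 M; have := s_sqr; have := M_ge18; rewrite -/s => *; nra. Qed.

Lemma f_mix_root_near_sqrt :
  exists2 x : R, 37/10 <= x <= Num.sqrt m%:R + 1/4 & f_mix_val m%:R x = 0.
Proof.
have [x /andP[x_ge x_le] /rootP] :
    exists2 x, s - 1/2 <= x <= s + 1/4 & root (f_mix R m) x.
  apply: poly_ivt; first by lra.
  have := f_mix_val_sqrt_sub_lt0 s_ge; have := f_mix_val_sqrt_add_gt0 s_ge.
  by rewrite !horner_f_mix s_sqr => hi lo; rewrite !ltW.
rewrite horner_f_mix => f_x; exists x => //.
by have := s_ge; rewrite -/M -/s => ?; apply/andP; split; lra.
Qed.

Lemma p_rho'_largest_root :
  exists2 r : R, Num.sqrt m%:R + 1/4 < r & is_largest_root (p_rho' R m) r.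
Proof.
have p_lo := p_rho'_val_sqrt_add_lt0 s_ge; rewrite s_sqr in p_lo.
have [r /andP[r_ge r_le] p_r] : exists2 r, s + 1/4 <= r <= M & root (p_rho' R m) r.
  apply: poly_ivt; first by have := s_sqr; have := s_ge; nra.
  by rewrite !horner_p_rho' ltW ?ltW ?p_rho'_val_self_gt0.
move/rootP: p_r; rewrite horner_p_rho' => p_r.
have r_gt : s + 1/4 < r.
  rewrite lt_neqAle r_ge andbT; apply/eqP => r_eq.
  by move: p_lo; rewrite r_eq p_r ltxx.
have r_ge4 : 4 <= r by have := s_ge; lra.
have r_sqr_ge : M <= r ^+ 2 by have := s_sqr; have := s_ge; nra.
exists r => //; split=> [|y /rootP]; first by apply/rootP; rewrite horner_p_rho'.
rewrite horner_p_rho' leNgt => p_y; apply/negP => r_lt_y.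
by have := p_rho'_val_lt M_ge18 r_sqr_ge r_ge4 r_lt_y; rewrite p_r p_y ltxx.
Qed.

End Roots.

Theorem proposition6p4 (R : rcfType) (m : nat) :
  ~~ odd m -> (18 <= m)%N ->
  exists rho rho' : R,
    [/\ is_spectral_radius (Gmix_adjmx R m) rho,
        is_largest_root (f_mix R m) rho,
        is_largest_root (p_rho' R m) rho'
      & rho < rho'].
Proof.
move=> _ m_ge18.
have [rho /andP[rho_ge rho_le] f_rho] := f_mix_root_near_sqrt R m_ge18.
have [rho' rho'_gt p_rho'_largest] := p_rho'_largest_root R m_ge18.
have norm_le := Gmix_eigenvalue_norm_le m_ge18 f_rho rho_ge.
exists rho, rho'; split => //; last by lra.
- split => //; exists rho; first exact: f_mix_root_eigenvalue.
  by rewrite ger0_norm //; lra.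
- split => [|x /rootP]; first by apply/rootP; rewrite horner_f_mix.
  rewrite horner_f_mix => f_x.
  exact: le_trans (ler_norm x) (norm_le _ (f_mix_root_eigenvalue m_ge18 f_x)).
Qed.
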